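(* Let $B\colon(\mathbf{Set}^{\mathsf{Ty}})^{op}\times\mathbf{Set}^{\mathsf{Ty}}\to\mathbf{Set}^{\mathsf{Ty}}$ be the bifunctor with $B_{\mathsf{unit}}(X,Y)=Y_{\mathsf{unit}}+1$ and $B_{\tau_1\to\tau_2}(X,Y)=Y_{\tau_1\to\tau_2}+Y_{\tau_2}^{X_{\tau_1}}$. Then: (1) $B$ is locally contractive in the first argument and locally non-expansive in the second argument; (2) the hom-set $\mathbf{Set}^{\mathsf{Ty}}(1,B(1,1))$ is inhabited; (3) for each $X\in\mathbf{Set}^{\mathsf{Ty}}$ the final sequence of the endofunctor $B(X,-)$ converges.
   Context: $\mathsf{Ty}$ is the set of types generated by $\tau::=\mathsf{unit}\mid\tau\to\tau$; the complexity is $|\mathsf{unit}|=1$, $|\tau_1\to\tau_2|=|\tau_1|+|\tau_2|$. $\mathbf{Set}^{\mathsf{Ty}}$ is the category of $\mathsf{Ty}$-sorted sets and sortwise maps, $1$ the terminal object (singleton at each sort); on morphisms $B$ acts by $B_{\mathsf{unit}}(f,g)=g_{\mathsf{unit}}+\mathrm{id}$ and $B_{\tau_1\to\tau_2}(f,g)=g_{\tau_1\to\tau_2}+(h\mapsto g_{\tau_2}\cdot h\cdot f_{\tau_1})$. Each hom-set carries the metric $d(f,g)=\sup\{2^{-(|\tau|-1)}\mid\tau\in\mathsf{Ty},f_\tau\ne g_\tau\}$ (with $\sup\emptyset=0$). $B$ is locally contractive in the first argument if there is $c\in[0,1)$ with $d(B(f,\mathrm{id}_Y),B(g,\mathrm{id}_Y))\le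 c\cdot d(f,g)$ for all $Y$ and $f,g\colon X\to X'$; locally non-expansive in the second argument if $d(B(\mathrm{id}_X,f),B(\mathrm{id}_X,g))\le d(f,g)$. The final sequence of an endofunctor $H$ is the ordinal-indexed diagram with $D_0=1$, $D_{\alpha+1}=HD_\alpha$, $D_{1,0}\colon H1\to1$ unique, $D_{\alpha+1,\beta+1}=HD_{\alpha,\beta}$, and $D_\alpha=\lim_{\beta<\alpha}D_\beta$ at limit ordinals; it converges if $D_{\alpha+1,\alpha}$ is an isomorphism for some $\alpha$. *)

From mathcomp Require Import all_boot all_order all_algebra.
From Stdlib Require Rdefinitions.
From mathcomp Require Import classical_sets reals Rstruct.
Notation R := Rdefinitions.R.
Set Implicit Arguments. Unset Strict Implicit. Unset Printing Implicit Defensive.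
Import Order.TTheory GRing.Theory Num.Theory.

Inductive Ty : Type := TUnit | TArr of Ty & Ty.

Fixpoint cplx (t : Ty) : nat :=
  match t with TUnit => 1 | TArr t1 t2 => cplx t1 + cplx t2 end.

(** The category Set^Ty: Ty-sorted sets and sortwise maps. *)
Definition tyset := Ty -> Type.
Definition tyhom (X Y : tyset) := forall t : Ty, X t -> Y t.
Definition tyid (X : tyset) : tyhom X X := fun t x => x.
Definition tycomp (X Y Z : tyset) (g : tyhom Y Z) (f : tyhom X Y) : tyhom X Z :=
  fun t x => g t (f t x).
Definition tyone : tyset := fun _ => unit.
Definition tybang (X : tyset) : tyhom X tyone := fun _ _ => tt.
Arguments tyid : clear implicits.
Arguments tybang : clear implicits.
Arguments tycomp [X Y Z] g f.

Definition is_iso (X Y : tyset) (f : tyhom X Y) : Prop :=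
  exists g : tyhom Y X,
    (forall t x, g t (f t x) = x) /\ (forall t y, f t (g t y) = y).

Definition B (X Y : tyset) : tyset := fun t =>
  match t with
  | TUnit => (Y TUnit + unit)%type
  | TArr t1 t2 => (Y (TArr t1 t2) + (X t1 -> Y t2))%type
  end.

Definition Bmap (X X' Y Y' : tyset) (f : tyhom X' X) (g : tyhom Y Y')
  : tyhom (B X Y) (B X' Y') := fun t =>
  match t as t0 return B X Y t0 -> B X' Y' t0 with
  | TUnit => fun s => match s with inl y => inl (g TUnit y) | inr u => inr u end
  | TArr t1 t2 => fun s => match s with
      | inl y => inl (g (TArr t1 t2) y)
      | inr h => inr (fun x => g t2 (h (f t1 x)))
      end
  end.

(** metric on hom-sets: d(f,g) = sup { 2^-(|t|-1) | f_t <> g_t }, sup of empty = 0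
    (mathcomp-analysis' [sup] returns 0 on the empty set). *)
Local Open Scope classical_set_scope.
Local Open Scope ring_scope.
Definition tydist (X Y : tyset) (f g : tyhom X Y) : R :=
  sup [set r : R | exists t : Ty, f t <> g t /\ r = (2 : R) ^- (cplx t).-1].

Definition locally_contractive_fst : Prop :=
  exists c : R, 0 <= c /\ c < 1 /\
    forall (X X' Y : tyset) (f g : tyhom X' X),
      tydist (Bmap f (tyid Y)) (Bmap g (tyid Y)) <= c * tydist f g.

Definition locally_nonexpansive_snd : Prop :=
  forall (X Y Y' : tyset) (f g : tyhom Y Y'),
    tydist (Bmap (tyid X) f) (Bmap (tyid X) g) <= tydist f g.

Unset Implicit Arguments.

(** Final sequence of H := B(X,-), stages 0 .. omega+1.
    D_0 = 1, D_{n+1} = H D_n, D_{1,0} = !, D_{n+2,n+1} = H D_{n+1,n}. *)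
Fixpoint fseq (X : tyset) (n : nat) : tyset :=
  match n with O => tyone | S m => B X (fseq X m) end.

Fixpoint fseq_step (X : tyset) (n : nat) : tyhom (fseq X n.+1) (fseq X n) :=
  match n as n0 return tyhom (fseq X n0.+1) (fseq X n0) with
  | O => tybang _
  | S m => Bmap (tyid X) (fseq_step X m)
  end.

(** D_omega = lim_{n<omega} D_n (sortwise: compatible families). *)
Definition fseq_omega (X : tyset) : tyset := fun t =>
  { x : forall n, fseq X n t | forall n, fseq_step X n t (x n.+1) = x n }.

Definition fseq_omega_proj (X : tyset) (n : nat) : tyhom (fseq_omega X) (fseq X n) :=
  fun t x => proj1_sig x n.

Definition fseq_omega1_proj (X : tyset) (n : nat)
  : tyhom (B X (fseq_omega X)) (fseq X n) :=
  match n as n0 return tyhom (B X (fseq_omega X)) (fseq X n0) with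
  | O => tybang _
  | S m => Bmap (tyid X) (fseq_omega_proj X m)
  end.

Lemma fseq_omega1_compat (X : tyset) (n : nat) (t : Ty) (x : B X (fseq_omega X) t) :
  fseq_step X n t (fseq_omega1_proj X n.+1 t x) = fseq_omega1_proj X n t x.
Proof.
case: n => [|n] //=.
case: t x => [|t1 t2] [y|h] //=; rewrite /fseq_omega_proj ?(proj2_sig y) //.
congr inr; apply: boolp.funext => z; exact: (proj2_sig (h z)).
Qed.

(** D_{omega+1,omega} : H D_omega -> D_omega, the unique map into the limit
    commuting with the projections. *)
Definition fseq_omega_step (X : tyset) : tyhom (B X (fseq_omega X)) (fseq_omega X) :=
  fun t x => exist (fun y : forall n, fseq X n t =>
                           forall n, fseq_step X n t (y n.+1) = y n)
                    (fun n => fseq_omega1_proj X n t x)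
                    (fun n => fseq_omega1_compat X n t x).

(** the final sequence converges (at some stage alpha <= omega) *)
Definition final_seq_converges (X : tyset) : Prop :=
  (exists n : nat, is_iso (fseq_step X n)) \/ is_iso (fseq_omega_step X).

From mathcomp Require Import all_boot all_order all_algebra.
From mathcomp Require Import classical_sets reals Rstruct.
From mathcomp Require Import boolp zify.
Import Order.TTheory GRing.Theory Num.Theory.

(* At a sort t1 -> t2, B(f, Y) only inspects f at t1, whose complexity is
   smaller by at least one, and B(X, g) only inspects g at t1 -> t2 and at
   t2; this gives the factors 1/2 and 1 on distances.  For the final
   sequence of B(X, -): at every sort B(X, Y) is a sum of a component of Y
   and either 1 or an exponential of a component of Y, and the connecting
   maps preserve the summand.  Hence a compatible family of the omega-chain
   lies in a single summand, so the limit commutes with B(X, -) and the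
   sequence converges at omega. *)

Lemma Bmap_unit_eq (X X' Y Y' : tyset) (f f' : tyhom X' X) (g g' : tyhom Y Y') :
  g TUnit = g' TUnit -> Bmap f g (t:=TUnit) = Bmap f' g' (t:=TUnit).
Proof. by move=> eg; rewrite /Bmap /= eg. Qed.

Lemma Bmap_arr_eq (X X' Y Y' : tyset) (f f' : tyhom X' X) (g g' : tyhom Y Y')
    (t1 t2 : Ty) :
  f t1 = f' t1 -> g (TArr t1 t2) = g' (TArr t1 t2) -> g t2 = g' t2 ->
  Bmap f g (t:=TArr t1 t2) = Bmap f' g' (t:=TArr t1 t2).
Proof. by move=> ef eg eg2; rewrite /Bmap /= ef eg eg2. Qed.

Section Metric.
Local Open Scope classical_set_scope.
Local Open Scope ring_scope.

Definition ty_weight (t : Ty) : R := 2 ^- (cplx t).-1.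

Lemma cplx_gt0 (t : Ty) : (0 < cplx t)%N.
Proof. by elim: t => //= t1 IH1 t2 _; rewrite addn_gt0 IH1. Qed.

Lemma half_ge0 : 0 <= 2^-1 :> R. Proof. by rewrite invr_ge0. Qed.

Lemma half_le1 : 2^-1 <= 1 :> R. Proof. by rewrite invf_le1 // ler1n. Qed.

Lemma ty_weightE (t : Ty) : ty_weight t = 2^-1 ^+ (cplx t).-1.
Proof. by rewrite exprVn. Qed.

Lemma ty_weight_ge0 (t : Ty) : 0 <= ty_weight t.
Proof. by rewrite ty_weightE exprn_ge0 // half_ge0. Qed.

Lemma ty_weight_le1 (t : Ty) : ty_weight t <= 1.
Proof. by rewrite ty_weightE exprn_ile1 // ?half_ge0 ?half_le1. Qed.

Lemma ty_weight_arr_dom (t1 t2 : Ty) :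
  ty_weight (TArr t1 t2) <= 2^-1 * ty_weight t1.
Proof.
rewrite !ty_weightE -exprS; apply: ler_wiXn2l; rewrite ?half_ge0 ?half_le1 //=.
by have := cplx_gt0 t1; have := cplx_gt0 t2; lia.
Qed.

Lemma ty_weight_arr_cod (t1 t2 : Ty) : ty_weight (TArr t1 t2) <= ty_weight t2.
Proof.
rewrite !ty_weightE; apply: ler_wiXn2l; rewrite ?half_ge0 ?half_le1 //=.
by have := cplx_gt0 t1; lia.
Qed.

Lemma ty_weight_le_tydist {X Y : tyset} {f g : tyhom X Y} {t : Ty} :
  f t <> g t -> ty_weight t <= tydist f g.
Proof.
move=> ft; apply: ub_le_sup; last by exists t.
by exists 1 => _ [s [_ ->]]; exact: ty_weight_le1.
Qed.

Lemma tydist_eq0 (X Y : tyset) (f g : tyhom X Y) :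
  (forall t, f t = g t) -> tydist f g = 0.
Proof.
move=> fg; rewrite /tydist (_ : [set _ | _] = set0) ?sup0 //.
by apply/seteqP; split=> // r [t [ft _]]; case: ft.
Qed.

Lemma tydist_ge0 (X Y : tyset) (f g : tyhom X Y) : 0 <= tydist f g.
Proof.
have [/tydist_eq0 -> //|/existsNP [t ft]] := pselect (forall t, f t = g t).
exact: le_trans (ty_weight_ge0 t) (ty_weight_le_tydist ft).
Qed.

Lemma tydist_le_scale (X Y X' Y' : tyset) (f g : tyhom X Y) (f' g' : tyhom X' Y')
    (c : R) :
  0 <= c ->
  (forall t, f t <> g t -> exists2 t', f' t' <> g' t' & ty_weight t <= c * ty_weight t') ->
  tydist f g <= c * tydist f' g'.
Proof.
move=> c0 dom.
have [/tydist_eq0 ->|/existsNP [t ft]] := pselect (forall t, f t = g t).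
  by rewrite mulr_ge0 ?tydist_ge0.
apply: ge_sup; first by exists (ty_weight t), t.
move=> _ [s [fs ->]]; have [s' fs' le_s] := dom s fs.
exact: le_trans le_s (ler_wpM2l c0 (ty_weight_le_tydist fs')).
Qed.

Lemma B_locally_contractive_fst : locally_contractive_fst.
Proof.
exists 2^-1; split; first exact: half_ge0.
split; first by rewrite invf_lt1 // ltr1n.
move=> X X' Y f g; apply: tydist_le_scale half_ge0 _ => -[|t1 t2] Bfg.
  by case: Bfg; exact: Bmap_unit_eq.
exists t1; last exact: ty_weight_arr_dom.
by move=> ft1; apply: Bfg; exact: Bmap_arr_eq.
Qed.

Lemma B_locally_nonexpansive_snd : locally_nonexpansive_snd.
Proof.
move=> X Y Y' f g; rewrite -[tydist f g]mul1r.
apply: tydist_le_scale ler01 _ => -[|t1 t2] Bfg.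
  by exists TUnit; rewrite ?mul1r // => fu; apply: Bfg; exact: Bmap_unit_eq.
have [ft|ft] := pselect (f (TArr t1 t2) = g (TArr t1 t2)); last first.
  by exists (TArr t1 t2); rewrite ?mul1r.
exists t2; last by rewrite mul1r ty_weight_arr_cod.
by move=> ft2; apply: Bfg; exact: Bmap_arr_eq.
Qed.

End Metric.

Definition chain_compatible {T : nat -> Type} (p : forall n, T n.+1 -> T n)
    (x : forall n, T n) : Prop :=
  forall n, p n (x n.+1) = x n.

Section SumChain.
Variables (A C : nat -> Type).
Variables (f : forall n, A n.+1 -> A n) (g : forall n, C n.+1 -> C n).

Definition sum_step (n : nat) (s : A n.+1 + C n.+1) : A n + C n :=
  match s with inl a => inl (f n a) | inr c => inr (g n c) end.

Lemma sum_chain_split (x : forall n, A n + C n) :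
  chain_compatible sum_step x ->
  (exists2 y, chain_compatible f y & forall n, x n = inl (y n)) \/
  (exists2 z, chain_compatible g z & forall n, x n = inr (z n)).
Proof.
move=> px; case x0: (x 0) => [a0|c0]; [left|right].
- have xl n : exists a, x n = inl a.
    elim: n => [|n [a xn]]; first by exists a0.
    by move: (px n); rewrite xn; case: (x n.+1) => // a' _; exists a'.
  pose y n := sval (cid (xl n)); have xy n : x n = inl (y n) := svalP (cid (xl n)).
  by exists y => // n; move: (px n); rewrite !xy => -[].
- have xr n : exists c, x n = inr c.
    elim: n => [|n [c xn]]; first by exists c0.
    by move: (px n); rewrite xn; case: (x n.+1) => // c' _; exists c'.
  pose y n := sval (cid (xr n)); have xy n : x n = inr (y n) := svalP (cid (xr n)).
  by exists y => // n; move: (px n); rewrite !xy => -[].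
Qed.

End SumChain.

Definition jointly_injective {Y : tyset} {Z : nat -> tyset}
    (p : forall n, tyhom Y (Z n)) : Prop :=
  forall t y y', (forall n, p n t y = p n t y') -> y = y'.

Lemma Bmap_jointly_injective {X Y : tyset} {Z : nat -> tyset}
    {p : forall n, tyhom Y (Z n)} :
  jointly_injective p -> jointly_injective (fun n => Bmap (tyid X) (p n)).
Proof.
move=> pinj [|t1 t2] [y|h] [y'|h'] e; try by have := e 0.
- by congr inl; apply: pinj => n; case: (e n).
- by case: h h' {e} => [] [].
- by congr inl; apply: pinj => n; case: (e n).
- congr inr; apply: functional_extensionality_dep => d.
  by apply: pinj => n; case: (e n) => /(congr1 (fun k => k d)).
Qed.

Lemma fseq_omega_eq (X : tyset) (t : Ty) (x y : fseq_omega X t) :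
  (forall n, sval x n.+1 = sval y n.+1) -> x = y.
Proof.
case: x y => x px [y py] /= exy.
have x_eq_y : x = y.
  by apply: functional_extensionality_dep => -[|n]; [case: (x 0); case: (y 0) | exact: exy].
by subst y; congr exist; exact: Prop_irrelevance.
Qed.

Lemma fseq_omega_proj_jointly_injective (X : tyset) :
  jointly_injective (fseq_omega_proj X).
Proof. by move=> t x y e; apply: fseq_omega_eq => n; exact: e. Qed.

Lemma fseq_omega_step_inj (X : tyset) (t : Ty) : injective (fseq_omega_step X t).
Proof.
move=> a b e; apply: (Bmap_jointly_injective (fseq_omega_proj_jointly_injective X)) => n.
exact: (congr1 (fun z => sval z n.+1) e).
Qed.

Lemma fseq_omega_step_surj (X : tyset) (t : Ty) (z : fseq_omega X t) :
  exists b, fseq_omega_step X t b = z.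
Proof.
case: z => x px; case: t x px => [|t1 t2] x px.
- have [[y py xy]|[u _ xu]] := @sum_chain_split (fun n => fseq X n TUnit) (fun=> unit)
    (fun n => fseq_step X n TUnit) (fun n u => u) (fun n => x n.+1) (fun n => px n.+1).
    by exists (inl (exist _ y py)); apply: fseq_omega_eq => n /=; rewrite xy.
  by exists (inr tt); apply: fseq_omega_eq => n /=; rewrite xu; case: (u n).
- have [[y py xy]|[h ph xh]] := @sum_chain_split (fun n => fseq X n (TArr t1 t2))
    (fun n => X t1 -> fseq X n t2) (fun n => fseq_step X n (TArr t1 t2))
    (fun n h d => fseq_step X n t2 (h d)) (fun n => x n.+1) (fun n => px n.+1).
    by exists (inl (exist _ y py)); apply: fseq_omega_eq => n /=; rewrite xy.
  have phd d : chain_compatible (fun n => fseq_step X n t2) (fun n => h n d).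
    by move=> n; exact: (congr1 (fun k => k d) (ph n)).
  by exists (inr (fun d => exist _ _ (phd d))); apply: fseq_omega_eq => n /=; rewrite xh.
Qed.

Lemma bijective_is_iso (X Y : tyset) (f : tyhom X Y) :
  (forall t, injective (f t)) -> (forall t y, exists x, f t x = y) -> is_iso f.
Proof.
move=> finj fsurj; exists (fun t y => sval (cid (fsurj t y))).
split=> [t x|t y]; last exact: svalP (cid (fsurj t y)).
by apply: finj; exact: svalP (cid (fsurj t (f t x))).
Qed.

Lemma final_seq_converges_omega (X : tyset) : final_seq_converges X.
Proof.
right; apply: bijective_is_iso; [exact: fseq_omega_step_inj | exact: fseq_omega_step_surj].
Qed.

Theorem lemma5p1 :
  (locally_contractive_fst /\ locally_nonexpansive_snd) /\
  inhabited (tyhom tyone (B tyone tyone)) /\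
  (forall X : tyset, final_seq_converges X).
Proof.
split; first by split; [exact: B_locally_contractive_fst | exact: B_locally_nonexpansive_snd].
split; last exact: final_seq_converges_omega.
by constructor => -[|t1 t2] _; [exact: inr tt | exact: inl tt].
Qed.
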